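(* Let $p$ be an odd prime and let $R$ be a local nearring whose additive group $R^+$ is isomorphic to the non-abelian group of order $p^3$ and exponent $p$. Then the commutator subgroup $D(R^+)$ of $R^+$ is an ideal of $R$.
   Context: A (left) nearring is a set $R$ with operations $+,\cdot$ such that $(R,+)$ is a group, $(R,\cdot)$ a semigroup, and $x(y+z)=xy+xz$ for all $x,y,z$. A nearring with identity is local if its non-invertible elements form a subgroup of $(R,+)$. An ideal of $R$ is a normal subgroup $I$ of $(R,+)$ such that $xI\subseteq I$ for all $x\in R$ and $(z+x)y-xy\in I$ for all $x,y\in R$, $z\in I$. For the group in question, $D(R^+)$ coincides with the center of $R^+$ and has order $p$. *)

(* A (left) nearring is modelled on a finite group gT, which
   is the additive group (R,+), written multiplicatively as in fingroup:
   the group law * is "+", 1 is "0", x^-1 is "-x". *)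
From HB Require Import structures.
From mathcomp Require Import all_boot all_fingroup all_solvable.
Set Implicit Arguments. Unset Strict Implicit. Unset Printing Implicit Defensive.
Local Open Scope group_scope.

Definition nearring (gT : finGroupType) (mul : gT -> gT -> gT) : Prop :=
  associative mul /\ (forall x y z : gT, mul x (y * z) = mul x y * mul x z).

Definition nr_identity (gT : finGroupType) (mul : gT -> gT -> gT) (e : gT) : Prop :=
  forall x : gT, mul e x = x /\ mul x e = x.

Definition nr_unit (gT : finGroupType) (mul : gT -> gT -> gT) (e x : gT) : bool :=
  [exists y : gT, (mul x y == e) && (mul y x == e)].

Definition local_nearring (gT : finGroupType) (mul : gT -> gT -> gT) : Prop :=
  nearring mul /\
  exists e : gT, nr_identity mul e /\
    group_set [set x : gT | ~~ nr_unit mul e x].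

Definition nr_ideal (gT : finGroupType) (mul : gT -> gT -> gT) (I : {set gT}) : Prop :=
  [/\ group_set I, I <| [set: gT],
      (forall x z : gT, z \in I -> mul x z \in I) &
      (forall x y z : gT, z \in I -> mul (z * x) y * (mul x y)^-1 \in I)].

From HB Require Import structures.
From mathcomp Require Import all_boot all_fingroup all_solvable.
Local Open Scope group_scope.
Set Implicit Arguments. Unset Strict Implicit. Unset Printing Implicit Defensive.

(* Write G for the additive group of R and D = [G, G].  As G is extraspecial
   of order p^3, D is its centre and has order p, and every subgroup strictly
   between D and G has order p^2 and is maximal in G.  Left multiplications are
   endomorphisms of G, so they preserve D, and a non-unit kills D: its kernel
   contains either D or a noncentral element, whose commutators generate D.

   Fix d0 <> 0 in D.  As t + e is a unit for t in D, the map t |-> (t + e) d0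
   sends the p elements of D to the p - 1 nonzero ones; a collision gives
   s <> 0 in D with s + e fixing D, and (s + e)(k s + e) = (k + 1) s + e
   then shows that every t + e fixes D.  Hence (t + e) g - g commutes with e,
   so it lies in <e> + D, and applying d0, which kills D but sends e to d0,
   forces it into D.  For a unit x the ideal condition follows by writing
   z + x = x (x' z + e).

   For a non-unit x, the subgroup of those y with (z + x) y - x y in D contains
   e, and it contains the maximal subgroup L of non-units: either all products
   of non-units lie in D, or some element of L outside D has the form 0 l and
   is therefore fixed by every left multiplication, which makes every left
   multiplication trivial on L = <0 l> + D modulo D. *)

Section LocalNearringOnExtraspecialGroup.

Variables (gT : finGroupType) (p : nat).
Hypotheses (p_pr : prime p) (card_gT : #|[set: gT]| = (p ^ 3)%N)
  (nab_gT : ~~ abelian [set: gT]).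

Local Notation G := [set: gT].
Local Notation D := [~: G, G].

Lemma extraspecialT : extraspecial G.
Proof.
apply: (p3group_extraspecial (p := p)) => //; last by rewrite card_gT pfactorK.
by rewrite /pgroup card_gT pnatX pnat_id.
Qed.

Lemma derT_center : D = 'Z(G).
Proof. by have [[_ <-] _] := extraspecialT; rewrite derg1. Qed.

Lemma card_derT : #|D| = p.
Proof.
have [_] := extraspecialT; rewrite -derT_center => prD.
have : #|D| %| p ^ 3 by rewrite -card_gT cardSg ?subsetT.
by rewrite Euclid_dvdX // andbT dvdn_prime2 // => /eqP.
Qed.

Lemma derT_nt : D :!=: 1.
Proof. by rewrite trivg_card1 card_derT; apply: contraTneq p_pr => ->. Qed.

Lemma derT_normal : D <| G.
Proof. by rewrite -derg1 der_normal. Qed.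

Lemma derT_norm : G \subset 'N(D).
Proof. exact: normal_norm derT_normal. Qed.

Lemma derT_cent d g : d \in D -> commute d g.
Proof. by rewrite derT_center => /centerP[_]; apply; rewrite inE. Qed.

Lemma derT_gen d : d \in D -> d != 1 -> D :=: <[d]>.
Proof. by move=> dD d1; apply: nt_gen_prime; rewrite ?card_derT // !inE d1. Qed.

Lemma order_derT d : d \in D -> d != 1 -> #[d] = p.
Proof. by move=> dD d1; rewrite orderE -derT_gen ?card_derT. Qed.

Lemma notin_derT_comm g : g \notin D -> exists h, [~ g, h] != 1.
Proof.
move=> gD; apply/existsP; apply: contraR gD; rewrite negb_exists => /forallP ncg.
rewrite derT_center; apply/centerP; split=> [|h _]; first by rewrite inE.
by apply/commgP; rewrite -[_ == 1]negbK ncg.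
Qed.

Lemma derT_proper : D \proper G.
Proof.
rewrite properEcard subsetT card_derT card_gT -{1}(expn1 p).
by rewrite ltn_exp2l ?prime_gt1.
Qed.

Section Intermediate.

Variable H : {group gT}.
Hypotheses (DH : D \proper H) (HG : H \proper G).

Lemma card_intermediate : #|H| = (p ^ 2)%N.
Proof.
have /dvdn_pfactor[//|k] : #|H| %| p ^ 3 by rewrite -card_gT cardSg ?subsetT.
have := proper_card HG; have := proper_card DH.
rewrite card_gT card_derT => ltpH ltHG _ oH.
have lt1p := prime_gt1 p_pr.
rewrite oH ltn_exp2l // in ltHG; rewrite oH -{1}(expn1 p) ltn_exp2l // in ltpH.
by rewrite oH; congr expn; apply/anti_leq/andP.
Qed.

Lemma intermediate_maximal : maximal H G.
Proof.
apply: p_index_maximal; rewrite ?subsetT //.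
rewrite -divgS ?subsetT // card_gT card_intermediate.
by rewrite -[(p ^ 3)%N]/(p * p ^ 2)%N mulnK ?expn_gt0 ?prime_gt0.
Qed.

Lemma intermediate_cycle_mul h : h \in H -> h \notin D -> H :=: <[h]> * D.
Proof.
move=> hH hD.
have maxD : maximal D H.
  apply: p_index_maximal; first exact: proper_sub.
  rewrite -divgS ?proper_sub // card_intermediate card_derT.
  by rewrite mulnK ?prime_gt0.
have cDh : <[h]> \subset 'C(D).
  by apply/centsP=> x _ d dD; apply/commute_sym/derT_cent.
rewrite -cent_joinEl //; apply/esym.
have sKH : <[h]> <*> D \subset H by rewrite join_subG cycle_subG hH proper_sub.
case: (eqVproper sKH) => [-> // | /(maxgroupP maxD).2 KD].
case/negP: hD; rewrite -(KD (joing_subr _ _)).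
exact: subsetP (joing_subl _ _) _ (cycle_id h).
Qed.

Lemma mem_intermediate h l : h \in H -> h \notin D -> l \in H ->
  exists i, exists2 d, d \in D & l = h ^+ i * d.
Proof.
move=> hH hD; rewrite (intermediate_cycle_mul hH hD).
by case/mulsgP=> _ d /cycleP[i ->] dD ->; exists i, d.
Qed.

End Intermediate.

Lemma cent1_intermediate g : g \notin D -> D \proper 'C[g] /\ 'C[g] \proper G.
Proof.
move=> gD; split.
  rewrite properE; apply/andP; split; last first.
    by apply/subsetPn; exists g; rewrite ?cent1id.
  by apply/subsetP=> d dD; apply/cent1P; apply: derT_cent.
have [h ngh] := notin_derT_comm gD.
rewrite properE subsetT; apply/subsetPn; exists h; first exact: in_setT.
by apply: contra ngh => /cent1P/commute_sym/commgP.
Qed.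

Variable mul : gT -> gT -> gT.
Hypothesis mulDr : forall x y z, mul x (y * z) = mul x y * mul x z.

Definition lmul x : {morphism G >-> gT} :=
  @Morphism _ _ G (mul x) (in2W (mulDr x)).

Lemma nr_mul1 x : mul x 1 = 1.
Proof. exact: (morph1 (lmul x)). Qed.

Lemma nr_mulV x y : mul x y^-1 = (mul x y)^-1.
Proof. by rewrite -[mul x _]/(lmul x _) morphV ?inE. Qed.

Lemma nr_mulX x y n : mul x (y ^+ n) = (mul x y) ^+ n.
Proof. by rewrite -[mul x _]/(lmul x _) morphX ?inE. Qed.

Lemma nr_mulR x y z : mul x [~ y, z] = [~ mul x y, mul x z].
Proof. by rewrite -[mul x _]/(lmul x _) morphR ?inE. Qed.

Lemma nr_mul_derT x z : z \in D -> mul x z \in D.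
Proof.
move=> zD; have : lmul x z \in lmul x @* D by apply: mem_morphim; rewrite ?inE.
by rewrite morphimR ?subsetT //; apply/subsetP/commgSS; apply: subsetT.
Qed.

Definition agree_mod (N : {set gT}) a b := [set y | mul a y * (mul b y)^-1 \in N].

Lemma group_set_agree_mod (N : {group gT}) a b :
  G \subset 'N(N) -> group_set (agree_mod N a b).
Proof.
move=> nNG; apply/group_setP; split; first by rewrite inE !nr_mul1 mulgV group1.
move=> y1 y2; rewrite !inE !mulDr invMg => N1 N2.
have -> : mul a y1 * mul a y2 * ((mul b y2)^-1 * (mul b y1)^-1) =
          mul a y1 * (mul b y1)^-1 * (mul a y2 * (mul b y2)^-1) ^ (mul b y1)^-1.
  by rewrite conjgE invgK !mulgA mulgKV.
by rewrite groupM // memJ_norm // (subsetP nNG) ?inE.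
Qed.

Variable e : gT.
Hypotheses (mulA : associative mul) (mul_id : nr_identity mul e).
Local Notation L := [set x : gT | ~~ nr_unit mul e x].

Lemma mul1e x : mul e x = x. Proof. by case: (mul_id x). Qed.
Lemma mule1 x : mul x e = x. Proof. by case: (mul_id x). Qed.

Lemma nr_unitP x : reflect (injective (mul x)) (nr_unit mul e x).
Proof.
apply: (iffP existsP) => [[y /andP[_ /eqP yx]] a b eq_ab | inj_x].
  by rewrite -(mul1e a) -(mul1e b) -yx -!mulA eq_ab.
have [f fK Kf] := injF_bij inj_x; exists (f e).
by rewrite Kf eqxx /=; apply/eqP/inj_x; rewrite mulA Kf mul1e mule1.
Qed.

Lemma nr_unit_id : nr_unit mul e e.
Proof. by apply/nr_unitP=> a b; rewrite !mul1e. Qed.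

Lemma nr_unit_mulr x y : nr_unit mul e (mul x y) -> nr_unit mul e y.
Proof.
move/nr_unitP=> inj_xy; apply/nr_unitP; apply: inj_compr (mul x) _ _.
by move=> a b /= eq_ab; apply: inj_xy; rewrite -!mulA eq_ab.
Qed.

Lemma nr_unit_mull x y : nr_unit mul e (mul x y) -> nr_unit mul e x.
Proof.
move=> unit_xy; have /nr_unitP inj_y := nr_unit_mulr unit_xy.
have [f fK Kf] := injF_bij inj_y; move/nr_unitP: unit_xy => inj_xy.
apply/nr_unitP=> a b eq_ab; rewrite -(Kf a) -(Kf b); congr (mul y _).
by apply: inj_xy; rewrite -!mulA !Kf.
Qed.

Lemma nr_unit_ker x : (forall g, mul x g = 1 -> g = 1) -> nr_unit mul e x.
Proof.
move=> ker1; apply/nr_unitP=> a b eq_ab; apply/eqP; rewrite eq_mulgV1; apply/eqP.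
by apply: ker1; rewrite mulDr nr_mulV eq_ab mulgV.
Qed.

Lemma nr_nonunit_stable (N : {set gT}) z :
  (forall x n, n \in N -> mul x n \in N) -> N \proper G -> z \in N ->
  ~~ nr_unit mul e z.
Proof.
move=> mulStable /properP[_ [r _ rN]] zN.
apply/negP=> /existsP[y /andP[_ /eqP yz]].
by case/negP: rN; rewrite -(mule1 r) -yz; apply/mulStable/mulStable.
Qed.


Hypothesis exp_gT : exponent G = p.
Hypothesis L_group : group_set L.
Canonical nonunit_group := Group L_group.

Lemma id_nonunit : e \notin L.
Proof. by rewrite inE negbK nr_unit_id. Qed.

Lemma derT_nonunit : D \subset L.
Proof.
apply/subsetP=> d dD; rewrite inE.
by apply: nr_nonunit_stable dD; [exact: nr_mul_derT | exact: derT_proper].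
Qed.

Lemma id_notin_derT : e \notin D.
Proof. exact: contra (subsetP derT_nonunit e) id_nonunit. Qed.

Lemma nonunit_mull x y : x \in L -> mul x y \in L.
Proof. by rewrite !inE; apply: contra; apply: nr_unit_mull. Qed.

Lemma nonunit_mulr x y : y \in L -> mul x y \in L.
Proof. by rewrite !inE; apply: contra; apply: nr_unit_mulr. Qed.

Lemma nonunit_kills_derT x d : x \in L -> d \in D -> mul x d = 1.
Proof.
move=> xL dD.
have [/forallP ker1 | /forallPn[g]] :=
  boolP [forall g, (mul x g == 1) ==> (g == 1)].
  move: xL; rewrite in_set => /negP[].
  by apply: nr_unit_ker => g /eqP/(implyP (ker1 g))/eqP.
rewrite negb_imply => /andP[/eqP xg g1].
have [d1 [d1D d1n1 xd1]] : exists d1, [/\ d1 \in D, d1 != 1 & mul x d1 = 1].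
  have [gD | /notin_derT_comm[h gh]] := boolP (g \in D); first by exists g.
  by exists [~ g, h]; rewrite mem_commg ?inE // nr_mulR xg comm1g.
move: dD; rewrite (derT_gen d1D d1n1) => /cycleP[i ->].
by rewrite nr_mulX xd1 expg1n.
Qed.

Lemma shift_unit t : t \in D -> nr_unit mul e (t * e).
Proof.
move=> tD; have := id_nonunit.
by rewrite -(groupMl e (subsetP derT_nonunit t tD)) inE negbK.
Qed.

Lemma shift_collision d0 : d0 \in D -> d0 != 1 ->
  exists t1 t2,
    [/\ t1 \in D, t2 \in D, t1 != t2 & mul (t1 * e) d0 = mul (t2 * e) d0].
Proof.
move=> d0D d0n1; pose F t := mul (t * e) d0.
have sFD : F @: D \subset D :\ 1.
  apply/subsetP=> _ /imsetP[t tD ->]; rewrite !inE nr_mul_derT // andbT.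
  have /nr_unitP inj_u := shift_unit tD.
  by apply: contra d0n1 => /eqP Ft1; apply/eqP/inj_u; rewrite nr_mul1.
have /dinjectivePn[t1 t1D [t2 /andP[t21 t2D] Ft12]] : ~~ dinjectiveb F D.
  apply/negP=> /dinjectiveP injF; have := subset_leq_card sFD.
  by rewrite card_in_imset // (cardsD1 1 D) group1 add1n ltnn.
by exists t1, t2; rewrite eq_sym.
Qed.

Lemma shift_fix_derT_exists :
  exists2 s, s \in D & s != 1 /\ {in D, forall d, mul (s * e) d = d}.
Proof.
have [d0 d0D d0n1] := trivgPn _ derT_nt.
have [t1 [t2 [t1D t2D t12 eqF]]] := shift_collision d0D d0n1.
have /nr_unitP inj_u1 := shift_unit t1D.
have [s sD us] : exists2 s, s \in D & mul (t1 * e) s = t2 * t1^-1.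
  have onto : mul (t1 * e) @: D = D.
    apply/eqP; rewrite eqEcard card_imset // leqnn andbT.
    by apply/subsetP=> _ /imsetP[x xD ->]; apply: nr_mul_derT.
  have : t2 * t1^-1 \in D by rewrite groupM ?groupV.
  by rewrite -{1}onto => /imsetP[s sD ->]; exists s.
have fix_d0 : mul (s * e) d0 = d0.
  by apply: inj_u1; rewrite mulA mulDr us mule1 mulgA mulgKV -eqF.
exists s => //; split.
  by apply: contra t12 => /eqP s1; rewrite eq_sym eq_mulgV1 -us s1 nr_mul1.
by rewrite (derT_gen d0D d0n1) => _ /cycleP[i ->]; rewrite nr_mulX fix_d0.
Qed.

Lemma shift_fix_derT t : t \in D -> {in D, forall d, mul (t * e) d = d}.
Proof.
have [s sD [s1 fix_s]] := shift_fix_derT_exists.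
rewrite {1}(derT_gen sD s1) => /cycleP[k ->] {t}.
elim: k => [|k IHk] d dD; first by rewrite mul1g mul1e.
have -> : s ^+ k.+1 * e = mul (s * e) (s ^+ k * e).
  by rewrite mulDr fix_s ?groupX // mule1 expgSr mulgA.
by rewrite -mulA IHk // fix_s.
Qed.

Lemma shift_comm t g : t \in D -> [~ e, mul (t * e) g] = [~ e, g].
Proof.
move=> tD; have egD : [~ e, g] \in D by rewrite mem_commg ?inE.
rewrite -(shift_fix_derT tD egD) nr_mulR mule1 commMgJ.
by have /commgP/eqP -> := derT_cent (mul (t * e) g) tD; rewrite conj1g mul1g.
Qed.

Lemma shift_mod_derT t g : t \in D -> mul (t * e) g * g^-1 \in D.
Proof.
move=> tD; set b := mul (t * e) g * g^-1.
have b_cent : b \in 'C[e].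
  have : [~ e, b * g] = [~ e, g] by rewrite mulgKV shift_comm.
  rewrite commgMJ => /(canRL (mulKg _)); rewrite mulVg => /eqP.
  by rewrite conjg_eq1 => /commgP/commute_sym/cent1P.
have [DC CG] := cent1_intermediate id_notin_derT.
have [i [d dD bE]] := mem_intermediate DC CG (cent1id e) id_notin_derT b_cent.
have [d0 d0D d0n1] := trivgPn _ derT_nt.
have d0L : d0 \in L := subsetP derT_nonunit d0 d0D.
have : mul d0 b = 1.
  rewrite /b mulDr nr_mulV mulA mulDr mule1.
  by rewrite (nonunit_kills_derT d0L tD) mul1g mulgV.
rewrite bE mulDr nr_mulX mule1 (nonunit_kills_derT d0L dD) mulg1 => /eqP.
rewrite -order_dvdn order_derT // => p_i.
have /eqP -> : e ^+ i == 1.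
  by rewrite -order_dvdn (dvdn_trans _ p_i) // -exp_gT dvdn_exponent ?inE.
by rewrite mul1g.
Qed.

Lemma nonunit_intermediate h :
  h \in L -> h \notin D -> D \proper L /\ L \proper G.
Proof.
move=> hL hD; split; apply/properP; split; rewrite ?subsetT ?derT_nonunit //.
  by exists h.
by exists e; [exact: in_setT | exact: id_nonunit].
Qed.

Lemma nonunit_mul_from_derT a l : a \in L -> l \in L -> mul a l \notin D ->
  exists2 d1, d1 \in D & exists2 l', l' \in L & mul d1 l' = mul a l.
Proof.
move=> aL lL alD; have alL := nonunit_mull l aL.
have [DL LG] := nonunit_intermediate alL alD.
have [k [d dD aVE]] := mem_intermediate DL LG alL alD (groupVr aL).
have lkL : l ^+ k \in L by rewrite groupX.
have /existsP[w' /andP[/eqP ww' _]] : nr_unit mul e (e * l ^+ k).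
  by have := id_nonunit; rewrite -(groupMr e lkL) in_set negbK.
exists (mul a (e * l ^+ k)).
  by rewrite mulDr mule1 nr_mulX (canRL (mulgK d) (esym aVE)) mulKVg groupV.
by exists (mul w' l); rewrite ?nonunit_mulr // -mulA (mulA _ w') ww' mul1e.
Qed.

Lemma nonunit_fixed_point a l : a \in L -> l \in L -> mul a l \notin D ->
  exists2 q, q \in L :\: D & forall r, mul r q = q.
Proof.
move=> aL lL alD; have alL := nonunit_mull l aL.
have [DL LG] := nonunit_intermediate alL alD.
have [d1 d1D [l' l'L d1l']] := nonunit_mul_from_derT aL lL alD.
have d1L := subsetP derT_nonunit d1 d1D.
exists (mul d1 (mul a l)).
  have [j [c cD l'E]] := mem_intermediate DL LG alL alD l'L.
  rewrite inE nonunit_mulr // andbT; apply: contra alD => qD.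
  by rewrite -d1l' l'E mulDr nr_mulX (nonunit_kills_derT d1L cD) mulg1 groupX.
have -> : mul d1 (mul a l) = mul 1 l'.
  by rewrite -d1l' mulA (nonunit_kills_derT d1L d1D).
by move=> r; rewrite mulA nr_mul1.
Qed.

Lemma mul_mod_derT_on_nonunit a l r x : a \in L -> l \in L -> mul a l \notin D ->
  x \in L -> mul r x * x^-1 \in D.
Proof.
move=> aL lL alD xL.
have [q /setDP[qL qD] fix_q] := nonunit_fixed_point aL lL alD.
have [DL LG] := nonunit_intermediate qL qD.
have [j [c cD ->]] := mem_intermediate DL LG qL qD xL.
have -> : mul r (q ^+ j * c) * (q ^+ j * c)^-1 = (mul r c * c^-1) ^ (q ^+ j)^-1.
  by rewrite mulDr nr_mulX fix_q invMg conjgE invgK !mulgA.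
by rewrite memJ_norm ?(subsetP derT_norm) ?inE // groupM ?groupV ?nr_mul_derT.
Qed.

Lemma nonunit_mul_mod_derT u v l : u \in L -> v \in L -> l \in L ->
  mul u l * (mul v l)^-1 \in D.
Proof.
move=> uL vL lL.
have [/existsP[a /existsP[b /and3P[aL bL abD]]] | /existsPn LLD] :=
  boolP [exists a, exists b, [&& a \in L, b \in L & mul a b \notin D]].
  have -> : mul u l * (mul v l)^-1 = mul u l * l^-1 * (mul v l * l^-1)^-1.
    by rewrite invMg invgK mulgA mulgKV.
  by rewrite groupM ?groupV // (mul_mod_derT_on_nonunit _ aL bL abD lL).
have LLD' a b : a \in L -> b \in L -> mul a b \in D.
  by move=> aL bL; move/existsPn: (LLD a) => /(_ b); rewrite aL bL negbK.
by rewrite groupM ?groupV ?LLD'.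
Qed.

Lemma nonunit_mulDl_defect x z y : x \in L -> z \in D ->
  mul (z * x) y * (mul x y)^-1 \in D.
Proof.
move=> xL zD; have zxL : z * x \in L by rewrite groupM // (subsetP derT_nonunit).
have [LD | /subsetPn[h hL hD]] := boolP (L \subset D).
  by rewrite groupM ?groupV ?(subsetP LD) ?nonunit_mull.
have [DL LG] := nonunit_intermediate hL hD.
pose S := Group (group_set_agree_mod (z * x) x derT_norm).
have sLS : L \subset S.
  by apply/subsetP=> l lL; rewrite inE nonunit_mul_mod_derT.
have : S :=: G.
  have [//|/(maxgroupP (intermediate_maximal DL LG)).2 SL] :=
    eqVproper (subsetT S).
  by case/negP: id_nonunit; rewrite -(SL sLS) inE !mule1 mulgK.
by move/setP/(_ y); rewrite inE in_setT.
Qed.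

Lemma mulDl_defect_derT x z y : z \in D -> mul (z * x) y * (mul x y)^-1 \in D.
Proof.
move=> zD; have [/existsP[x' /andP[/eqP xx' _]] | xL] := boolP (nr_unit mul e x).
  have -> : z * x = mul x (mul x' z * e) by rewrite mulDr mulA xx' mul1e mule1.
  by rewrite -mulA -nr_mulV -mulDr nr_mul_derT // shift_mod_derT // nr_mul_derT.
by apply: nonunit_mulDl_defect; rewrite // in_set.
Qed.

End LocalNearringOnExtraspecialGroup.

Unset Implicit Arguments. Set Strict Implicit.

Theorem lemma7 (p : nat) (gT : finGroupType) (mul : gT -> gT -> gT) :
  prime p -> odd p ->
  local_nearring mul ->
  #|[set: gT]| = (p ^ 3)%N ->
  ~~ abelian [set: gT] ->
  exponent [set: gT] = p ->
  nr_ideal mul [~: [set: gT], [set: gT]].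
Proof.
move=> p_pr _ [[mulA mulDr] [e [mul_id L_group]]] card_gT nab_gT exp_gT.
split; [exact: groupP | exact: derT_normal | exact: nr_mul_derT |].
move=> x y z.
exact: (mulDl_defect_derT p_pr card_gT nab_gT mulDr mulA mul_id exp_gT L_group).
Qed.
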